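(* Let $n\geq1$, let $H_n$ be the disconnected anti-regular graph with loops on $n$ vertices and $G_{n-1}$ the connected anti-regular graph with loops on $n-1$ vertices. Then the multiset of eigenvalues of $A(H_n)$ is $\{0\}\cup\sigma(n-1)$, where $\sigma(m)$ is the multiset of eigenvalues of $A(G_m)$ and $\sigma(0)=\emptyset$. In particular the eigenvalues of $A(H_n)$ are $0$ together with $\frac{(-1)^{n}}{2\cos\left(\frac{2j-1}{2n-1}\pi\right)}$, $j=1,\ldots,n-1$.
   Context: A graph with loops is a pair $(V,E)$ with $E$ a set of 2-element multisets of $V$ (loops allowed, at most one per vertex, no multiple edges); the degree of a vertex counts a loop once. An anti-regular graph with loops is one in which all vertex degrees are distinct. For each $n\ge1$ there are exactly two up to isomorphism: the connected one $G_n$ with degree sequence $(1,\ldots,n)$ and the disconnected one $H_n$ with degree sequence $(0,\ldots,n-1)$; $H_n$ is the complement of $G_n$ (complement taken including loops). The adjacency matrix has diagonal entry $1$ exactly at vertices with a loop. *)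

From HB Require Import structures.
From mathcomp Require Import all_boot all_order all_algebra all_field.
Set Implicit Arguments. Unset Strict Implicit. Unset Printing Implicit Defensive.
Import Order.TTheory GRing.Theory Num.Theory.

(* A graph with loops on the vertex set 'I_n is a symmetric relation
   e : rel 'I_n; e i i holds iff there is a loop at i (at most one loop,
   no multiple edges automatically). *)

(* degree of a vertex: number of neighbours j (a loop j = i counted once) *)
Definition deg (n : nat) (e : rel 'I_n) (i : 'I_n) : nat := #|[set j | e i j]|.

Definition anti_regular (n : nat) (e : rel 'I_n) : Prop := injective (deg e).

(* H_n : the anti-regular graph with loops with degree sequence (0,...,n-1)
   (given distinct degrees on n vertices, this is: every degree is < n). *)
Definition is_H (n : nat) (e : rel 'I_n) : Prop :=
  [/\ symmetric e, anti_regular e & forall i, deg e i < n].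

(* G_n : the anti-regular graph with loops with degree sequence (1,...,n)
   (given distinct degrees on n vertices, each <= n: every degree is > 0). *)
Definition is_G (n : nat) (e : rel 'I_n) : Prop :=
  [/\ symmetric e, anti_regular e & forall i, 0 < deg e i].

Definition adjmx (n : nat) (e : rel 'I_n) : 'M[algC]_n :=
  \matrix_(i, j) ((e i j)%:R)%R.

(* In H_n two vertices of degrees a, b are adjacent iff a + b >= n, and in G_n iff
   a + b > n: deleting the isolated vertex of H_n leaves G_(n-1), whose complement is
   H_(n-1), so both facts follow by one induction.  Hence, for z^(2m+1) = -1, the vector
   whose entry at a vertex of degree k is (-1)^k (z^(2k) - z^(-2k)) is an eigenvector of
   both A(H_(m+1)) and A(G_m) for the eigenvalue (-1)^(m+1) / (z + 1/z).  Taking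
   z = w^(2j+1), j < m, for a primitive 2(2m+1)-th root of unity w gives m distinct
   eigenvalues, and the isolated vertex of H_(m+1) adds the eigenvalue 0.
   That w = (2m+1).-root (-1) is primitive comes from the maximality of its real part:
   for |y| = 1, y <> 1, the identity sum_p 1/|1-p|^2 = r^2/|1-y|^2 over the r-th roots p
   of y forces one of them to be strictly closer to 1 than y. *)

From HB Require Import structures.
From mathcomp Require Import all_boot all_order all_algebra all_field.
From mathcomp Require Import zify ring.
Import Order.TTheory GRing.Theory Num.Theory.
Set Implicit Arguments. Unset Strict Implicit. Unset Printing Implicit Defensive.

(* On ['I_n] this is [deg]; stating it for any finType allows deleting a vertex. *)
Definition degree (T : finType) (e : rel T) (x : T) : nat := #|[set y | e x y]|.

Definition threshold (N : nat) (T : finType) (e : rel T) : Prop :=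
  forall x y, e x y = (N <= degree e x + degree e y).

Lemma degree_le (T : finType) (e : rel T) x : degree e x <= #|T|.
Proof. exact: max_card. Qed.

Definition relC (T : Type) (e : rel T) : rel T := fun x y => ~~ e x y.

Lemma degree_relC (T : finType) (e : rel T) x : degree (relC e) x = #|T| - degree e x.
Proof.
by rewrite /degree cardsCs; congr (_ - _); apply: eq_card => y; rewrite !inE negbK.
Qed.

Lemma injective_onto (T : finType) (f : T -> nat) (lo : nat) :
  injective f -> (forall x, lo <= f x < lo + #|T|) ->
  forall i, lo <= i < lo + #|T| -> exists x, f x = i.
Proof.
move=> inj_f f_range i i_range.
have lt_f x : f x - lo < #|T| by have := f_range x; lia.
pose g x := Ordinal (lt_f x).
have inj_g : injective g.
  by move=> x y /(congr1 val) /= eq_xy; apply: inj_f; have := f_range x; have := f_range y; lia.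
have lt_i : i - lo < #|T| by lia.
have : Ordinal lt_i \in codom g by apply: inj_card_onto; rewrite ?card_ord.
by case/codomP => x /(congr1 val) /= eq_i; exists x; have := f_range x; lia.
Qed.

Lemma degree_del_vertex (T : finType) (b : T) (e : rel T) (x : {x | x != b}) :
  degree e (val x) = e (val x) b + degree (fun x y : {x | x != b} => e (val x) (val y)) x.
Proof.
rewrite /degree (cardsD1 b) inE; congr (_ + _)%N.
rewrite -(card_imset _ val_inj); apply: eq_card => y; rewrite !inE.
apply/andP/imsetP => [[y_b e_xy] | [y' ]].
  by exists (exist (fun x => x != b) y y_b); rewrite ?inE.
by rewrite inE => e_xy ->; split; first exact: (valP y').
Qed.

Lemma threshold_of_compl (N : nat) (T : finType) (e : rel T) : #|T| = N ->
  threshold N (relC e) -> threshold N.+1 e.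
Proof.
move=> card_T thC x y; apply: negb_inj; rewrite -[~~ e x y]/(relC e x y) thC.
rewrite !degree_relC card_T.
have := degree_le e x; have := degree_le e y; rewrite card_T.
by move=> le_y le_x; apply/idP/idP; lia.
Qed.

Lemma anti_regular_relC (N : nat) (T : finType) (e : rel T) :
  #|T| = N -> symmetric e -> injective (degree e) -> (forall x, 0 < degree e x) ->
  [/\ symmetric (relC e), injective (degree (relC e)) & forall x, degree (relC e) x < N].
Proof.
move=> card_T sym_e inj_e pos_e; split.
- by move=> x y; rewrite /relC sym_e.
- move=> x y; rewrite !degree_relC card_T => eq_deg; apply: inj_e.
  have := degree_le e x; have := degree_le e y; rewrite card_T; lia.
- move=> x; rewrite degree_relC; have := degree_le e x; rewrite card_T.
  by have := pos_e x; lia.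
Qed.

Lemma anti_regular_threshold (N : nat) (T : finType) (e : rel T) :
  #|T| = N -> symmetric e -> injective (degree e) -> (forall x, degree e x < N) ->
  threshold N e.
Proof.
elim: N T e => [|N IH] T e card_T sym_e inj_e lt_e x; first by have := lt_e x.
have [b deg_b] : exists b, degree e b = 0.
  by apply: (injective_onto (lo := 0) inj_e) => [y|]; rewrite card_T ?lt_e.
have isolated_b y : e y b = false.
  by rewrite sym_e; move/cards0_eq/setP/(_ y): deg_b; rewrite !inE.
pose e' (x y : {x | x != b}) := e (val x) (val y).
have deg_e' x' : degree e' x' = degree e (val x').
  by rewrite (@degree_del_vertex _ b e) isolated_b.
have card_T' : #|{: {x | x != b}}| = N by rewrite card_sig cardC1 card_T.
have th_e' : threshold N.+1 e'.
  apply: (threshold_of_compl card_T').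
  have [|||symC injC ltC] := anti_regular_relC card_T' _ _ (e := e').
  - by move=> x' y'; rewrite /e' sym_e.
  - by move=> x' y' /eqP; rewrite !deg_e' => /eqP /inj_e /val_inj.
  - move=> x'; rewrite deg_e' lt0n; apply: contra (valP x') => /eqP deg0.
    by apply/eqP/inj_e; rewrite deg0 deg_b.
  exact: IH card_T' symC injC ltC.
move=> y; have [-> | x_b] := eqVneq x b.
  by rewrite sym_e isolated_b deg_b add0n leqNgt ltnS -ltnS lt_e.
have [-> | y_b] := eqVneq y b.
  by rewrite isolated_b deg_b addn0 leqNgt ltnS -ltnS lt_e.
by have := th_e' (exist _ x x_b) (exist _ y y_b); rewrite !deg_e'.
Qed.

Lemma anti_regular_threshold_pos (N : nat) (T : finType) (e : rel T) :
  #|T| = N -> symmetric e -> injective (degree e) -> (forall x, 0 < degree e x) ->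
  threshold N.+1 e.
Proof.
move=> card_T sym_e inj_e pos_e; apply: (threshold_of_compl card_T).
by have [] := anti_regular_relC card_T sym_e inj_e pos_e; exact: anti_regular_threshold.
Qed.

Local Open Scope ring_scope.

Section ThresholdEigenvector.
Variables (R : fieldType) (m : nat) (c : R) (u : nat -> R).
Hypotheses (u0 : u 0 = 0)
  (u_rec : forall k, (k < m)%N -> u (m - k) = c * (u k.+1 - u k)).

Lemma sum_threshold k : (k <= m)%N ->
  \sum_(i < m.+1) u i * (m < i + k)%:R = c * u k.
Proof.
elim: k => [|k IH] le_k_m.
  by rewrite u0 mulr0 big1 // => i _; rewrite addn0 ltnNge -ltnS ltn_ord mulr0.
have lt_mk : (m - k < m.+1)%N by lia.
have -> : \sum_(i < m.+1) u i * (m < i + k.+1)%:R =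
    \sum_(i < m.+1) u i * (m < i + k)%:R + u (m - k).
  rewrite (bigD1 (Ordinal lt_mk)) //= [X in _ = X + _](bigD1 (Ordinal lt_mk)) //=.
  rewrite (_ : m < m - k + k.+1 = true)%N; last by apply/idP; lia.
  rewrite (_ : m < m - k + k = false)%N; last by apply/negbTE; lia.
  rewrite mulr1 mulr0 add0r addrC; congr (_ + _); apply: eq_bigr => i ne_i.
  have {}ne_i : nat_of_ord i != (m - k)%N.
    by apply: contra ne_i => /eqP eq_i; apply/eqP/val_inj.
  by rewrite (_ : m < i + k.+1 = (m < i + k))%N //; apply/idP/idP; lia.
by rewrite IH ?(ltnW le_k_m) // u_rec // -mulrDr addrC subrK.
Qed.

(* The third hypothesis says that [d] is a bijection onto [0..m] or onto [1..m]. *)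
Lemma threshold_eigenvalue n (A : 'M[R]_n) (d : 'I_n -> nat) :
  (forall a b, A a b = (m < d a + d b)%:R) -> (forall a, (d a <= m)%N) ->
  (forall F : nat -> R, F 0%N = 0 -> \sum_a F (d a) = \sum_(i < m.+1) F i) ->
  (exists a, u (d a) != 0) -> eigenvalue A c.
Proof.
move=> A_def d_le sum_d [a0 u_a0]; apply/eigenvalueP.
exists (\row_a u (d a)); last by apply/eqP => /rowP /(_ a0); rewrite !mxE; apply/eqP.
apply/rowP => b; rewrite !mxE -sum_threshold ?d_le //.
under eq_bigr => a _ do rewrite !mxE A_def.
by rewrite (sum_d (fun i => u i * (m < i + d b)%:R)) ?u0 ?mul0r.
Qed.

End ThresholdEigenvector.

Lemma sum_injective_ord (R : nmodType) (N : nat) (f : 'I_N -> nat) (F : nat -> R) :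
  injective f -> (forall a, (f a < N)%N) -> \sum_a F (f a) = \sum_(i < N) F i.
Proof.
move=> inj_f lt_f; pose g a := Ordinal (lt_f a).
have inj_g : injective g by move=> a b /(congr1 val) /inj_f.
by rewrite [RHS](reindex_inj inj_g).
Qed.

Lemma eigenvalue0_row0 (F : fieldType) (n : nat) (A : 'M[F]_n) (i : 'I_n) :
  row i A = 0 -> eigenvalue A 0.
Proof.
move=> row_i0; apply/eigenvalueP; exists (delta_mx 0 i); first by rewrite -rowE row_i0 scale0r.
by apply/eqP => /matrixP /(_ 0 i); rewrite !mxE !eqxx => /eqP; rewrite oner_eq0.
Qed.

Lemma char_poly_eigenvalues (F : fieldType) (n : nat) (A : 'M[F]_n) (s : seq F) :
  size s = n -> uniq s -> all (eigenvalue A) s ->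
  char_poly A = \prod_(x <- s) ('X - x%:P).
Proof.
move=> size_s uniq_s eig_s.
have size_char : size (char_poly A) = (size s).+1 by rewrite size_char_poly size_s.
rewrite (all_roots_prod_XsubC size_char) ?uniq_rootsE //.
  by rewrite (monicP (char_poly_monic A)) scale1r.
by apply: sub_all eig_s => x; rewrite eigenvalue_root_char.
Qed.

Section AntiRegularEigenvector.
Variables (R : fieldType) (m : nat) (z : R).
Hypotheses (z_odd_root : z ^+ (2 * m).+1 = -1) (z4_neq1 : z ^+ 4 != 1).

(* For z = exp(i t) this is 2i (-1)^k sin(2kt). *)
Definition antireg_vec (k : nat) : R := (-1) ^+ k * (z ^+ (2 * k) - (z ^+ (2 * k))^-1).

Definition antireg_val : R := (-1) ^+ m.+1 / (z + z^-1).

Lemma antireg_z_neq0 : z != 0.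
Proof.
apply/eqP => z0; move/eqP: z_odd_root.
by rewrite z0 expr0n /= eq_sym oppr_eq0 oner_eq0.
Qed.

Lemma antireg_trace_neq0 : z + z^-1 != 0.
Proof.
apply: contra z4_neq1 => /eqP sum0.
have z2 : z ^+ 2 = -1.
  have : z * (z + z^-1) == 0 by rewrite sum0 mulr0.
  by rewrite mulrDr mulfV ?antireg_z_neq0 // -expr2 addr_eq0 => /eqP.
by rewrite (_ : 4 = 2 * 2)%N // exprM z2 sqrrN expr1n.
Qed.

Lemma antireg_val_neq0 : antireg_val != 0.
Proof. by rewrite mulf_neq0 ?invr_eq0 ?signr_eq0 ?antireg_trace_neq0. Qed.

Lemma antireg_vec0 : antireg_vec 0 = 0.
Proof. by rewrite /antireg_vec !expr0 invr1 subrr mulr0. Qed.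

Lemma antireg_vec1_neq0 : antireg_vec 1 != 0.
Proof.
rewrite /antireg_vec expr1 muln1 mulN1r oppr_eq0 subr_eq0.
apply: contra z4_neq1 => /eqP z2.
by rewrite (_ : 4 = 2 + 2)%N // exprD {1}z2 mulVf // expf_neq0 // antireg_z_neq0.
Qed.

Lemma antireg_vec_rec k : (k < m)%N ->
  antireg_vec (m - k) = antireg_val * (antireg_vec k.+1 - antireg_vec k).
Proof.
move=> lt_k_m; have z_neq0 := antireg_z_neq0.
rewrite /antireg_vec /antireg_val.
rewrite (_ : (-1) ^+ m.+1 = (-1) ^+ (m - k) * (-1) ^+ k.+1 :> R); last first.
  by rewrite -exprD; congr (_ ^+ _); lia.
set A := z ^+ (2 * k).
have A_neq0 : A != 0 by rewrite expf_neq0.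
have zA : z ^+ (2 * (m - k)) = - (A * z)^-1.
  apply: (mulIf (mulf_neq0 A_neq0 z_neq0)); rewrite mulNr mulVf ?mulf_neq0 //.
  by rewrite -exprSr -exprD -z_odd_root; congr (_ ^+ _); lia.
have z2A : z ^+ (2 * k.+1) = A * z ^+ 2 by rewrite mulnS exprD mulrC.
have zz1_neq0 : z * z + 1 != 0.
  rewrite (_ : z * z + 1 = z * (z + z^-1)) ?mulf_neq0 ?antireg_trace_neq0 //.
  by rewrite mulrDr mulfV.
rewrite zA z2A !exprS.
have := sqrf_eq1 ((-1) ^+ k : R); rewrite sqrr_sign eqxx.
by case/esym/orP => /eqP ->; field; rewrite A_neq0 z_neq0 zz1_neq0 oppr_eq0 oner_eq0.
Qed.

End AntiRegularEigenvector.

Lemma sum_prim_root_expM (R : idomainType) (r : nat) (eta : R) (e : nat) :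
  r.-primitive_root eta ->
  \sum_(i < r) eta ^+ (i * e) = if (r %| e)%N then r%:R else 0.
Proof.
move=> eta_prim; under eq_bigr => i _ do rewrite mulnC exprM.
case: ifPn => [dvd_r_e | ndvd_r_e].
  have -> : eta ^+ e = 1 by apply/eqP; rewrite -(prim_order_dvd eta_prim).
  by under eq_bigr => i _ do rewrite expr1n; rewrite sumr_const card_ord.
have eta_e1 : eta ^+ e - 1 != 0 by rewrite subr_eq0 -(prim_order_dvd eta_prim).
apply: (mulfI eta_e1); rewrite mulr0 -subrX1 -exprM mulnC exprM.
by rewrite (prim_expr_order eta_prim) expr1n subrr.
Qed.

Section RootsSum.
Variables (R : fieldType) (r : nat) (eta p0 y : R).
Hypotheses (eta_prim : r.-primitive_root eta) (p0_root : p0 ^+ r = y) (y_neq1 : y != 1).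

Let p (i : nat) := p0 * eta ^+ i.

Lemma root_shift_expr i : p i ^+ r = y.
Proof. by rewrite exprMn -exprM mulnC exprM (prim_expr_order eta_prim) expr1n mulr1. Qed.

Lemma root_shift_neq1 i : p i != 1.
Proof. by apply: contra y_neq1 => /eqP p_1; rewrite -(root_shift_expr i) p_1 expr1n. Qed.

Lemma sum_root_shift_expr e : \sum_(i < r) p i ^+ e = p0 ^+ e * (if (r %| e)%N then r%:R else 0).
Proof.
rewrite -(sum_prim_root_expM e eta_prim) mulr_sumr.
by apply: eq_bigr => i _; rewrite exprMn -exprM mulnC.
Qed.

Lemma root_shift_frac_geom i :
  p i / (1 - p i) ^+ 2 = (\sum_(k < r) \sum_(l < r) p i ^+ (k + l).+1) / (1 - y) ^+ 2.
Proof.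
have geom : 1 - y = (1 - p i) * \sum_(k < r) p i ^+ k.
  by rewrite -(root_shift_expr i) -opprB subrX1 -mulNr opprB.
have pi_neq1 : 1 - p i != 0 by rewrite subr_eq0 eq_sym root_shift_neq1.
have y_neq1' : 1 - y != 0 by rewrite subr_eq0 eq_sym.
have geom_neq0 : \sum_(k < r) p i ^+ k != 0.
  by apply: contraNneq y_neq1' => sum0; rewrite geom sum0 mulr0.
have -> : \sum_(k < r) \sum_(l < r) p i ^+ (k + l).+1 = p i * (\sum_(k < r) p i ^+ k) ^+ 2.
  rewrite expr2 big_distrlr mulr_sumr; apply: eq_bigr => k _.
  by rewrite mulr_sumr; apply: eq_bigr => l _; rewrite exprS exprD.
by rewrite geom; field; rewrite geom_neq0 pi_neq1.
Qed.

Lemma sum_root_shift_frac :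
  \sum_(i < r) p i / (1 - p i) ^+ 2 = r%:R ^+ 2 * y / (1 - y) ^+ 2.
Proof.
under eq_bigr => i _ do rewrite root_shift_frac_geom.
rewrite -mulr_suml exchange_big /=; under eq_bigr => k _ do rewrite exchange_big /=.
suff inner k : (k < r)%N -> \sum_(l < r) \sum_(i < r) p i ^+ (k + l).+1 = r%:R * y.
  rewrite (eq_bigr _ (fun (k : 'I_r) _ => inner k (ltn_ord k))).
  by rewrite sumr_const card_ord; ring.
move=> lt_k_r; under eq_bigr => l _ do rewrite sum_root_shift_expr.
have lt_l : (r - k.+1 < r)%N by lia.
rewrite (bigD1 (Ordinal lt_l)) //= big1 ?addr0.
  by rewrite (_ : (k + (r - k.+1)).+1 = r)%N ?dvdnn ?p0_root 1?mulrC //; lia.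
move=> l ne_l; have {}ne_l : nat_of_ord l != (r - k.+1)%N.
  by apply: contra ne_l => /eqP eq_l; apply/eqP/val_inj.
suff -> : (r %| (k + l).+1)%N = false by rewrite mulr0.
by apply/negP => /dvdnP [[|[|q]] eq_q]; have := ltn_ord l; lia.
Qed.

End RootsSum.

Lemma conjC_unit (p : algC) : `|p| = 1 -> p^* = p^-1.
Proof. by move=> p_unit; rewrite invC_norm p_unit expr1n invr1 mul1r. Qed.

Lemma ReC_unit (p : algC) : `|p| = 1 -> 2 * 'Re p = p + p^-1.
Proof. by move=> p_unit; rewrite ReE conjC_unit // mulrC divfK // pnatr_eq0. Qed.

Lemma unit_neq0 (p : algC) : `|p| = 1 -> p != 0.
Proof. by move=> p_unit; rewrite -normr_eq0 p_unit oner_eq0. Qed.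

Lemma sqr_norm_1B_unit (p : algC) : `|p| = 1 -> `|1 - p| ^+ 2 = - (1 - p) ^+ 2 / p.
Proof.
move=> p_unit; have p_neq0 := unit_neq0 p_unit.
have conj_1B : (1 - p)^* = 1 - p^-1 by rewrite -conjC_unit // rmorphB rmorph1.
by rewrite normCK conj_1B; field.
Qed.

Lemma sqr_norm_1B_Re (p : algC) : `|p| = 1 -> `|1 - p| ^+ 2 = 2 - 2 * 'Re p.
Proof.
move=> p_unit; have p_neq0 := unit_neq0 p_unit.
by rewrite sqr_norm_1B_unit // ReC_unit //; field.
Qed.

Lemma exists_root_closer_to1 (r : nat) (y : algC) :
  (1 < r)%N -> `|y| = 1 -> y != 1 -> exists2 p, p ^+ r = y & `|1 - p| < `|1 - y|.
Proof.
move=> r_gt1 y_unit y_neq1; have r_gt0 : (0 < r)%N by lia.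
have [eta eta_prim] := C_prim_root_exists r_gt0.
pose p i := r.-root y * eta ^+ i.
have p_root i : p i ^+ r = y := root_shift_expr eta_prim (rootCK r_gt0 y) i.
case: (pickP [pred i : 'I_r | `|1 - p i| < `|1 - y|]) => [i closer | farther].
  by exists (p i).
have p_unit i : `|p i| = 1.
  apply/eqP; rewrite -(pexpr_eq1 r_gt0) ?normr_ge0 //.
  by rewrite -normrX p_root y_unit.
have y_dist_gt0 : 0 < `|1 - y| by rewrite normr_gt0 subr_eq0 eq_sym.
have frac_dist (q : algC) : `|q| = 1 -> q / (1 - q) ^+ 2 = - (`|1 - q| ^+ 2)^-1.
  by move=> q_unit; rewrite sqr_norm_1B_unit // invf_div invrN mulrN opprK.
have := sum_root_shift_frac eta_prim (rootCK r_gt0 y) y_neq1.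
rewrite -/p (eq_bigr _ (fun (i : 'I_r) _ => frac_dist _ (p_unit i))) -mulrA frac_dist //.
rewrite sumrN mulrN => /oppr_inj sum_dist.
have far (i : 'I_r) : `|1 - y| <= `|1 - p i|.
  by rewrite real_leNgt ?realE ?normr_ge0 //; have := farther i => /= ->.
have : \sum_(i < r) (`|1 - p i| ^+ 2)^-1 <= \sum_(i < r) (`|1 - y| ^+ 2)^-1.
  apply: ler_sum => i _; rewrite lef_pV2 ?posrE ?exprn_gt0 ?lerXn2r ?nnegrE ?far //.
  exact: lt_le_trans y_dist_gt0 (far i).
rewrite sum_dist sumr_const card_ord -[`|1 - y| ^- 2 *+ r]mulr_natl.
by rewrite ler_pM2r ?invr_gt0 ?exprn_gt0 // -natrX ler_nat; nia.
Qed.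

Lemma prim_root_half_expN1 (R : idomainType) (d N : nat) (w : R) :
  (1 : R) != -1 -> d.-primitive_root w -> w ^+ N = -1 ->
  exists e r, [/\ N = (r * e)%N, d = (2 * e)%N & w ^+ e = -1].
Proof.
move=> one_neqN1 w_prim wN.
have d_gt0 := prim_order_gt0 w_prim.
have ndvd_d_N : ~~ (d %| N)%N by rewrite (prim_order_dvd w_prim) wN eq_sym.
have dvd_d_2N : (d %| 2 * N)%N by rewrite (prim_order_dvd w_prim) mulnC exprM wN sqrrN expr1n.
have [r def_2N] := dvdnP dvd_d_2N.
have r_odd : odd r.
  apply: contraR ndvd_d_N => r_even; apply/dvdnP; exists r./2.
  by have := odd_double_half r; rewrite (negbTE r_even) add0n -muln2; nia.
have d_even : ~~ odd d.
  by have := congr1 odd def_2N; rewrite !oddM r_odd /= => <-.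
have def_d : d = (2 * d./2)%N.
  by have := odd_double_half d; rewrite (negbTE d_even) add0n -muln2 mulnC.
exists d./2, r; split=> //; first by nia.
have : (w ^+ d./2) ^+ 2 == 1 by rewrite -exprM mulnC -def_d (prim_expr_order w_prim).
rewrite sqrf_eq1 => /orP [w_half | /eqP //].
by move: w_half; rewrite -(prim_order_dvd w_prim) => /dvdn_leq; lia.
Qed.

Lemma rootCN1_prim (N : nat) :
  (0 < N)%N -> (2 * N).-primitive_root (N.-root (-1 : algC)).
Proof.
move=> N_gt0; set w := N.-root (-1 : algC).
have wN : w ^+ N = -1 := rootCK N_gt0 (-1).
have one_neqN1 : (1 : algC) != -1 by rewrite -addr_eq0 (_ : 1 + 1 = 2%:R) // pnatr_eq0.
have w_unit : `|w| = 1.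
  by apply/eqP; rewrite -(pexpr_eq1 N_gt0) ?normr_ge0 // -normrX wN normrN normr1.
have w_neq1 : w != 1 by apply: contraNneq one_neqN1 => w1; rewrite -wN w1 expr1n.
have [d w_prim _] : {d | d.-primitive_root w & (d %| 2 * N)%N}.
  by apply: prim_order_exists; rewrite ?muln_gt0 // mulnC exprM wN sqrrN expr1n.
have [<- // | d_neq] := eqVneq d (2 * N)%N.
have [e [r [def_N def_d we]]] := prim_root_half_expN1 one_neqN1 w_prim wN.
have r_gt1 : (1 < r)%N by move: def_N d_neq; rewrite def_d; case: r => [|[|r]]; lia.
have [p pr_w closer] := exists_root_closer_to1 r_gt1 w_unit w_neq1.
pose q := if 0 <= 'Im p then p else p^*.
have qN : q ^+ N = -1.
  have pN : p ^+ N = -1 by rewrite def_N exprM pr_w we.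
  by rewrite /q; case: ifP => // _; rewrite -rmorphXn pN rmorphN1.
have q_Im : 0 <= 'Im q.
  rewrite /q; case: ifP => // Im_p; rewrite Im_conj oppr_ge0 ltW //.
  by rewrite real_ltNge ?Creal_Im ?Im_p.
have q_Re : 'Re q = 'Re p by rewrite /q; case: ifP => // _; rewrite Re_conj.
have p_unit : `|p| = 1.
  by apply/eqP; rewrite -(pexpr_eq1 (ltnW r_gt1)) ?normr_ge0 // -normrX pr_w w_unit.
have := rootC_Re_max N_gt0 qN q_Im; rewrite -/w q_Re real_leNgt ?Creal_Re //.
have := ltrXn2r 2 (normr_ge0 _) closer; rewrite !sqr_norm_1B_Re //.
by rewrite ltrD2l ltrN2 ltr_pM2l ?ltr0n // => ->.
Qed.

Lemma is_H_threshold (n : nat) (e : rel 'I_n) : is_H e -> threshold n e.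
Proof. by case=> sym_e inj_e lt_e; apply: anti_regular_threshold; rewrite ?card_ord. Qed.

Lemma is_G_threshold (n : nat) (e : rel 'I_n) : is_G e -> threshold n.+1 e.
Proof. by case=> sym_e inj_e pos_e; apply: anti_regular_threshold_pos; rewrite ?card_ord. Qed.

Lemma is_H_onto (n : nat) (e : rel 'I_n) i : is_H e -> (i < n)%N -> exists a, deg e a = i.
Proof.
by case=> _ inj_e lt_e lt_i; apply: (injective_onto (lo := 0) inj_e); rewrite card_ord.
Qed.

Lemma is_G_onto (n : nat) (e : rel 'I_n) i : is_G e -> (0 < i <= n)%N -> exists a, deg e a = i.
Proof.
case=> _ inj_e pos_e lt_i; apply: (injective_onto (lo := 1) inj_e); rewrite card_ord //.
by move=> a; rewrite pos_e /= ltnS -[X in (_ <= X)%N](card_ord n) degree_le.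
Qed.

Section AntiRegularSpectrum.
Variables (m : nat) (z : algC).
Hypotheses (m_gt0 : (0 < m)%N) (z_odd_root : z ^+ (2 * m).+1 = -1) (z4_neq1 : z ^+ 4 != 1).

Let vec0 := antireg_vec0 z.
Let vec_rec := antireg_vec_rec z_odd_root z4_neq1.

Lemma is_H_eigenvalue (e : rel 'I_m.+1) : is_H e -> eigenvalue (adjmx e) (antireg_val m z).
Proof.
move=> H_e; have [_ inj_e lt_e] := H_e.
apply: (threshold_eigenvalue vec0 vec_rec (d := deg e)).
- by move=> a b; rewrite mxE (is_H_threshold H_e).
- by move=> a; rewrite -ltnS lt_e.
- by move=> F _; apply: sum_injective_ord.
- have [a deg_a] := is_H_onto (i := 1) H_e m_gt0.
  by exists a; rewrite deg_a (antireg_vec1_neq0 z_odd_root z4_neq1).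
Qed.

Lemma is_G_eigenvalue (e : rel 'I_m) : is_G e -> eigenvalue (adjmx e) (antireg_val m z).
Proof.
move=> G_e; have [_ inj_e pos_e] := G_e.
have le_e a : (deg e a <= m)%N by rewrite -[X in (_ <= X)%N](card_ord m) degree_le.
apply: (threshold_eigenvalue vec0 vec_rec (d := deg e)) => //.
- by move=> a b; rewrite mxE (is_G_threshold G_e).
- move=> F F0; rewrite big_ord_recl F0 add0r.
  have lt_e a : ((deg e a).-1 < m)%N by have := pos_e a; have := le_e a; lia.
  rewrite -(sum_injective_ord (fun i => F i.+1) _ lt_e); last first.
    by move=> a b /= eq_ab; apply: inj_e; have := pos_e a; have := pos_e b; lia.
  by apply: eq_bigr => a _; rewrite prednK ?pos_e.
- have [a deg_a] := is_G_onto (i := 1) G_e m_gt0.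
  by exists a; rewrite deg_a (antireg_vec1_neq0 z_odd_root z4_neq1).
Qed.

End AntiRegularSpectrum.

Lemma is_H_eigenvalue0 (n : nat) (e : rel 'I_n) : is_H e -> (0 < n)%N -> eigenvalue (adjmx e) 0.
Proof.
move=> H_e n_gt0; have [a deg_a] := is_H_onto (i := 0) H_e n_gt0.
apply: (eigenvalue0_row0 (i := a)); apply/rowP => b; rewrite !mxE.
by move/cards0_eq/setP/(_ b): deg_a; rewrite !inE => ->.
Qed.

Lemma eq_addrV (F : fieldType) (a b : F) : a != 0 -> b != 0 ->
  a + a^-1 = b + b^-1 -> a = b \/ a * b = 1.
Proof.
move=> a_neq0 b_neq0 eq_ab.
have : (a - b) * (1 - (a * b)^-1) == 0.
  have -> : (a - b) * (1 - (a * b)^-1) = (a + a^-1) - (b + b^-1).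
    by field; rewrite a_neq0 b_neq0.
  by rewrite eq_ab subrr.
rewrite mulf_eq0 !subr_eq0 => /orP [/eqP -> | /eqP ab1]; [left | right] => //.
by rewrite -[LHS]invrK -ab1 invr1.
Qed.

Section OddRootsOfUnity.
Variables (m : nat) (w : algC).
Hypotheses (w_prim : (2 * (2 * m).+1).-primitive_root w) (wN : w ^+ (2 * m).+1 = -1).

Let zeta (j : nat) := w ^+ (2 * j).+1.

Lemma odd_root_expr j : zeta j ^+ (2 * m).+1 = -1.
Proof. by rewrite /zeta exprAC wN exprS exprM sqrrN !expr1n mulr1. Qed.

Lemma odd_root_expr4 j : (j < m)%N -> zeta j ^+ 4 != 1.
Proof.
move=> lt_j_m; rewrite /zeta -exprM -(prim_order_dvd w_prim).
by apply/negP => /dvdnP [[|[|q]] eq_q]; lia.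
Qed.

Lemma odd_root_unit j : `|zeta j| = 1.
Proof.
apply/eqP; rewrite -(pexpr_eq1 (ltn0Sn (2 * m))) ?normr_ge0 //.
by rewrite -normrX odd_root_expr normrN normr1.
Qed.

Lemma antireg_val_odd_root_inj : injective (fun j : 'I_m => antireg_val m (zeta j)).
Proof.
move=> j k /= eq_val; have neq0 i := antireg_z_neq0 (odd_root_expr i).
have eq_tr : zeta j + (zeta j)^-1 = zeta k + (zeta k)^-1.
  apply: invr_inj; apply: (mulfI (_ : (-1) ^+ m.+1 != 0 :> algC)) => //.
  by rewrite signr_eq0.
have lt_j := ltn_ord j; have lt_k := ltn_ord k; apply: val_inj => /=.
case: (eq_addrV (neq0 j) (neq0 k) eq_tr) => [/eqP | /eqP].
  by rewrite (eq_prim_root_expr w_prim) !modn_small; lia.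
by rewrite -exprD -(prim_order_dvd w_prim) => /dvdnP [[|[|q]] eq_q]; lia.
Qed.

End OddRootsOfUnity.

Definition antireg_spectrum (m : nat) : seq algC :=
  [seq antireg_val m (((2 * m).+1).-root (-1) ^+ (2 * j).+1) | j : 'I_m <- enum 'I_m].

Lemma size_antireg_spectrum m : size (antireg_spectrum m) = m.
Proof. by rewrite size_map size_enum_ord. Qed.

Lemma antireg_spectrumP m x : x \in antireg_spectrum m ->
  exists z, [/\ (0 < m)%N, z ^+ (2 * m).+1 = -1, z ^+ 4 != 1 & x = antireg_val m z].
Proof.
case/mapP => j _ ->; have w_prim := rootCN1_prim (ltn0Sn (2 * m)).
exists (((2 * m).+1).-root (-1) ^+ (2 * j).+1); split=> //.
- exact: leq_ltn_trans (leq0n j) (ltn_ord j).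
- exact/odd_root_expr/rootCK.
- exact (odd_root_expr4 w_prim (ltn_ord j)).
Qed.

Lemma antireg_spectrum_uniq m : uniq (0 :: antireg_spectrum m).
Proof.
rewrite /= map_inj_uniq ?enum_uniq ?andbT; last first.
  exact: antireg_val_odd_root_inj (rootCN1_prim _) (rootCK _ _).
apply/negP => /antireg_spectrumP [z [_ z_root z4 /esym/eqP]].
by apply/negP; exact: antireg_val_neq0 z_root z4.
Qed.

Lemma char_poly_is_G m (e : rel 'I_m) :
  is_G e -> char_poly (adjmx e) = \prod_(x <- antireg_spectrum m) ('X - x%:P).
Proof.
move=> G_e; apply: char_poly_eigenvalues; rewrite ?size_antireg_spectrum //.
  by have /andP [] := antireg_spectrum_uniq m.
apply/allP => x /antireg_spectrumP [z [m_gt0 z_root z4 ->]].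
exact: is_G_eigenvalue.
Qed.

Lemma char_poly_is_H m (e : rel 'I_m.+1) :
  is_H e -> char_poly (adjmx e) = 'X * \prod_(x <- antireg_spectrum m) ('X - x%:P).
Proof.
move=> H_e; rewrite (@char_poly_eigenvalues _ _ _ (0 :: antireg_spectrum m)).
- by rewrite big_cons subr0.
- by rewrite /= size_antireg_spectrum.
- exact: antireg_spectrum_uniq.
rewrite /= is_H_eigenvalue0 //; apply/allP => x /antireg_spectrumP [z [m_gt0 z_root z4 ->]].
exact: is_H_eigenvalue.
Qed.

Theorem mainTheorem7 (n : nat) (hn : (1 <= n)%N)
    (eH : rel 'I_n) (eG : rel 'I_n.-1) :
  is_H eH -> is_G eG ->
  char_poly (adjmx eH) = 'X * char_poly (adjmx eG) /\
  char_poly (adjmx eH) =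
    'X * \prod_(j < n.-1)
           ('X - ((-1) ^+ n / (2 * 'Re (((2 * n).-1).-root (-1) ^+ (2 * j).+1)))%:P).
Proof.
case: n hn eH eG => [//|m] _ eH; rewrite -[m.+1.-1]/m => eG H_e G_e.
rewrite (_ : (2 * m.+1).-1 = (2 * m).+1)%N; last by lia.
rewrite char_poly_is_H // char_poly_is_G //; split=> //.
congr (_ * _); rewrite big_map big_enum; apply: eq_bigr => j _.
by rewrite /antireg_val ReC_unit // (odd_root_unit (rootCK _ _)).
Qed.
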